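(* Let $P$ be a finite poset, $\mathfrak{m}=(x_p)_{p\in P}\subseteq k[x_P]$ and $d\ge2$. Then $\mathfrak{m}^d$ is $P$-stable if and only if $P$ is a disjoint union of posets whose Hasse diagrams are rooted trees with the roots on top.
   Context: $k$ is a field and $k[x_P]$ the polynomial ring in variables $x_p$, $p\in P$. A rooted tree with the root on top means a connected poset whose Hasse diagram is a tree and which has a unique maximal element (the root). For $b\in P$, a $b$-chain is a multichain $C: p_1\le\dots\le p_r$ with $p_r\le b$; its length is $r$ and $m_C=\prod x_{p_i}$; $C$ is in a monomial $m$ if $m_C\mid m$; it is a longest $b$-chain in $m$ if no $b$-chain in $m$ is longer; it goes through $a$ if $a\le b$ and $a$ is comparable to every $p_i$. For an antichain $B$, $m_B=\prod_{b\in B}x_b$. A monomial ideal $I$ is $P$-stable if whenever $m=n\,m_B\in I$ ($n$ a monomial, $B$ an antichain) and $a\in P$ is such that for each $b\in B$ some longest $b$-chain in $m$ goes through $a$, then $n\,x_a\in I$. *)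

From HB Require Import structures.
From mathcomp Require Import all_boot all_order.
Set Implicit Arguments. Unset Strict Implicit. Unset Printing Implicit Defensive.
Import Order.Theory.
Local Open Scope order_scope.

Section PStable.
Variables (disp : Order.disp_t) (T : finPOrderType disp).

(* A monomial of k[x_P] is represented by its exponent vector. *)
Definition mono := {ffun T -> nat}.

Definition mmul (m n : mono) : mono := [ffun p => (m p + n p)%N].
Definition xvar (a : T) : mono := [ffun p => nat_of_bool (p == a)].
Definition mset (B : {set T}) : mono := [ffun p => nat_of_bool (p \in B)].
Definition seq_mono (s : seq T) : mono := [ffun p => count_mem p s].
Definition mdvd (m n : mono) : bool := [forall p, (m p <= n p)%N].

Definition bchain (b : T) (C : seq T) : bool :=
  sorted (fun x y : T => x <= y) C && (last b C <= b).
Definition chain_in (C : seq T) (m : mono) : bool := mdvd (seq_mono C) m.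
Definition longest_bchain (b : T) (C : seq T) (m : mono) : Prop :=
  [/\ bchain b C, chain_in C m &
      forall C' : seq T, bchain b C' -> chain_in C' m -> (size C' <= size C)%N].
Definition goes_through (a b : T) (C : seq T) : bool :=
  (a <= b) && all (fun p => a >=< p) C.

Definition antichain (B : {set T}) : Prop :=
  {in B &, forall x y : T, x >=< y -> x = y}.

(* a monomial ideal is given by its set of monomials *)
Definition P_stable (I : mono -> Prop) : Prop :=
  forall (n : mono) (B : {set T}) (a : T),
    antichain B -> I (mmul n (mset B)) ->
    (forall b, b \in B -> exists C : seq T,
        longest_bchain b C (mmul n (mset B)) /\ goes_through a b C) ->
    I (mmul n (xvar a)).

(* monomials of m^e, m = (x_p)_{p in P}: those divisible by a product of e variables *)
Definition maxpow (e : nat) (m : mono) : Prop :=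
  exists s : seq T, size s = e /\ mdvd (seq_mono s) m.

Definition covers_in (S : {set T}) (x y : T) : bool :=
  [&& x \in S, y \in S, x < y & [forall z, ~~ [&& z \in S, x < z & z < y]]].
Definition hasse_edge (S : {set T}) : rel T :=
  fun x y => covers_in S x y || covers_in S y x.

Definition hasse_tree (S : {set T}) : Prop :=
  {in S &, forall x y, connect (hasse_edge S) x y} /\
  (forall c : seq T, (3 <= size c)%N -> ~~ ucycleb (hasse_edge S) c).

Definition maximal_in (S : {set T}) (y : T) : Prop :=
  y \in S /\ forall z, z \in S -> y <= z -> z = y.

Definition rooted_tree (S : {set T}) : Prop :=
  [/\ {in S &, forall x y, connect (fun u v => (u \in S) && (v \in S) && (u >=< v)) x y},
      hasse_tree S &
      exists r, maximal_in S r /\ forall y, maximal_in S y -> y = r].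

Definition rooted_forest : Prop :=
  exists Pi : {set {set T}},
    [/\ partition Pi [set: T],
        (forall S1 S2, S1 \in Pi -> S2 \in Pi -> S1 != S2 ->
           forall x y, x \in S1 -> y \in S2 -> ~~ (x >=< y)) &
        (forall S, S \in Pi -> rooted_tree S)].

End PStable.

From HB Require Import structures.
From mathcomp Require Import all_boot all_order.
Set Implicit Arguments. Unset Strict Implicit. Unset Printing Implicit Defensive.
Import Order.Theory.
Local Open Scope order_scope.

(* Both sides are equivalent to: every principal up-set of P is a chain.
   If a <= b1, b2 with b1, b2 incomparable, take n = x_a^(d-2) and B = {b1, b2}:
   for b in B the chain a^(d-2) b is a longest b-chain in n m_B and goes through a,
   n m_B lies in m^d, but n x_a has degree d - 1.  Conversely, if up-sets are chains,
   an antichain B whose elements all lie above a has at most one element, so n x_a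
   has degree at least that of n m_B.
   In a rooted forest, two distinct upper covers of x join the root of its tree by
   Hasse paths staying above x, which closes a cycle.  Conversely, when up-sets are
   chains, "having a common upper bound" is an equivalence whose classes are rooted
   trees: the minimum of a Hasse cycle would have two distinct upper covers. *)

Section Monomials.
Variables (disp : Order.disp_t) (T : finPOrderType disp).

Definition mdeg (m : mono T) : nat := \sum_p m p.

Lemma sum_count_mem (s : seq T) : \sum_p count_mem p s = size s.
Proof.
elim: s => [|x s IHs] /=; first by rewrite big1.
rewrite big_split IHs /= (bigD1 x) //= eqxx big1 // => p.
by rewrite eq_sym => /negbTE ->.
Qed.

Lemma mdeg_seq_mono s : mdeg (seq_mono s) = size s.
Proof. by rewrite -sum_count_mem; apply: eq_bigr => p _; rewrite ffunE. Qed.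

Lemma mdeg_mmul m1 m2 : mdeg (mmul m1 m2) = (mdeg m1 + mdeg m2)%N.
Proof. by rewrite /mdeg -big_split; apply: eq_bigr => p _; rewrite ffunE. Qed.

Lemma mdeg_xvar a : mdeg (xvar a) = 1%N.
Proof.
rewrite /mdeg (bigD1 a) //= ffunE eqxx big1 // => p /negbTE.
by rewrite ffunE => ->.
Qed.

Lemma mdeg_mset B : mdeg (mset B) = #|B|.
Proof.
by rewrite -sum1_card big_mkcond; apply: eq_bigr => p _; rewrite ffunE; case: (p \in B).
Qed.

Lemma mdvd_mdeg m1 m2 : mdvd m1 m2 -> (mdeg m1 <= mdeg m2)%N.
Proof. by move/forallP=> le12; apply: leq_sum => p _. Qed.

Lemma seq_mono_onto (m : mono T) : {s | seq_mono s = m}.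
Proof.
exists (flatten [seq nseq (m p) p | p <- enum T]); apply/ffunP => q.
rewrite ffunE count_flatten -map_comp sumnE big_map big_enum /= (bigD1 q) //=.
rewrite count_nseq /= eqxx mul1n big1 ?addn0 // => p /negbTE.
by rewrite /= count_nseq /= => ->.
Qed.

Lemma maxpowE e m : maxpow e m <-> (e <= mdeg m)%N.
Proof.
split=> [[s [<- /mdvd_mdeg]]|]; first by rewrite mdeg_seq_mono.
have [s <-] := seq_mono_onto m; rewrite mdeg_seq_mono => le_e.
exists (take e s); split; first by rewrite size_takel.
by apply/forallP => p; rewrite !ffunE -{2}(cat_take_drop e s) count_cat leq_addr.
Qed.

End Monomials.

Section FinPOrderInduction.
Variables (disp : Order.disp_t) (T : finPOrderType disp).

Lemma gt_ind (P : T -> Prop) :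
  (forall x, (forall y, x < y -> P y) -> P x) -> forall x, P x.
Proof.
move=> IH x; have [n] := ubnP #|[set y | x < y]|.
elim: n x => // n IHn x lt_n; apply: IH => y xy; apply: IHn.
rewrite -ltnS (leq_trans _ lt_n) // ltnS proper_card //; apply/properP; split.
- by apply/subsetP => z; rewrite !inE; apply: lt_trans.
- by exists y; rewrite !inE ?xy ?ltxx.
Qed.

Lemma exists_maximal (P : pred T) y : P y ->
  exists z, [/\ P z, y <= z & forall w, P w -> z <= w -> w = z].
Proof.
elim/gt_ind: y => y IH Py.
case: (pickP [pred w | P w && (y < w)]) => [w /andP [Pw yw] | noP].
  have [z [Pz wz zmax]] := IH w yw Pw.
  by exists z; split => //; apply: le_trans (ltW yw) wz.
exists y; split => // w Pw yw; case: (eqVneq w y) => // ne.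
by move: (noP w); rewrite /= Pw lt_neqAle eq_sym ne yw.
Qed.

End FinPOrderInduction.

Lemma exists_minimal (disp : Order.disp_t) (T : finPOrderType disp) (P : pred T) y :
  P y -> exists z, [/\ P z, z <= y & forall w, P w -> w <= z -> w = z].
Proof. exact: (@exists_maximal _ T^d). Qed.

Lemma ucycle_through (T : finType) (e : rel T) (A : {pred T}) x y1 y2 :
  symmetric e -> x \notin A -> e x y1 -> e x y2 -> y1 != y2 ->
  connect [rel u v in A | e u v] y1 y2 ->
  exists2 c : seq T, (3 <= size c)%N & ucycleb e c.
Proof.
move=> sym_e xNA e_xy1 e_xy2 y12 /connectP [p p_path y2_last]; subst y2.
move: e_xy2 y12; case: (shortenP p_path) => q q_path q_uniq _ e_xy2 y12.
case: q => [|z q] in q_path q_uniq e_xy2 y12 *; first by rewrite eqxx in y12.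
have path_A u r : path [rel u v in A | e u v] u r -> all [in A] r.
  by elim: r u => //= w r IHr u /andP [/andP [/andP [_ ->] _] /IHr].
have yq_A : all [in A] [:: y1, z & q].
  apply/andP; split; last exact: path_A q_path.
  by case/andP: q_path => /andP [/andP [->]].
exists [:: x, y1, z & q] => //; rewrite /ucycleb cons_uniq q_uniq andbT.
apply/andP; split; last by apply: contra xNA => /(allP yq_A).
rewrite /cycle rcons_path /= e_xy1 [e _ x]sym_e e_xy2 andbT.
by apply: sub_path q_path => u v /andP [].
Qed.

Definition upset_chains (disp : Order.disp_t) (T : finPOrderType disp) : Prop :=
  forall a b1 b2 : T, a <= b1 -> a <= b2 -> b1 >=< b2.

Section Hasse.
Variables (disp : Order.disp_t) (T : finPOrderType disp) (S : {set T}).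

Definition unique_upper_covers : Prop :=
  forall x y1 y2, covers_in S x y1 -> covers_in S x y2 -> y1 = y2.

Lemma hasse_edge_sym : symmetric (hasse_edge S).
Proof. by move=> u v; rewrite /hasse_edge orbC. Qed.

Lemma upset_chains_unique_covers : upset_chains T -> unique_upper_covers.
Proof.
move=> chainT x y1 y2 /and4P [_ y1S xy1 /forallP no_y1] /and4P [_ y2S xy2 /forallP no_y2].
case: (comparable_ltgtP (chainT _ _ _ (ltW xy1) (ltW xy2))) => // [y12|y21].
- by move: (no_y2 y1); rewrite y1S xy1 y12.
- by move: (no_y1 y2); rewrite y2S xy2 y21.
Qed.

Lemma unique_covers_hasse_acyclic : unique_upper_covers ->
  forall c, (3 <= size c)%N -> ~~ ucycleb (hasse_edge S) c.
Proof.
move=> uniq_cov [//|c0 c] c3; apply/negP => /andP [c_cycle c_uniq].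
(* Rotate the cycle to start at a minimal element z: both neighbours of z cover z. *)
have [z [zc _ z_min]] := exists_minimal (P := [in c0 :: c]) (mem_head c0 c).
case/rot_to: zc => i s rot_c.
have : cycle (hasse_edge S) (z :: s) by rewrite -rot_c rot_cycle.
have : uniq (z :: s) by rewrite -rot_c rot_uniq.
have : (3 <= size (z :: s))%N by rewrite -rot_c size_rot.
have z_up y : y \in z :: s -> hasse_edge S z y -> covers_in S z y.
  move=> ys /orP [//|/and4P [_ _ yz _]].
  by move: (yz); rewrite (z_min y) ?ltxx ?(ltW yz) // -(mem_rot i) rot_c.
case: s z_up {rot_c} => [|y1 [|w r]] // z_up _ /and3P [_ y1N _].
rewrite /cycle rcons_path => /andP [/andP [zy1 _] /=]; rewrite hasse_edge_sym => zy2.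
have y12 : y1 = last w r.
  apply: uniq_cov (z_up _ _ zy1) (z_up _ _ zy2); rewrite 2!in_cons ?mem_last ?eqxx ?orbT //.
by move: y1N; rewrite y12 mem_last.
Qed.

Hypothesis S_closed : closed (>=<%O) S.

Lemma exists_covers_in x b : x \in S -> x < b -> exists2 y, covers_in S x y & y <= b.
Proof.
move=> xS xb.
have /(exists_minimal (P := fun z => (x < z) && (z <= b))) [y [/andP [xy yb] _ y_min]] :
  (x < b) && (b <= b) by rewrite xb lexx.
exists y => //; rewrite /covers_in xS -(S_closed (lt_comparable xy)) xS xy /=.
apply/forallP => z; apply/negP => /and3P [_ xz zy].
have zy_eq : z = y by apply: y_min; rewrite ?xz ?(le_trans (ltW zy) yb) ?ltW.
by rewrite zy_eq ltxx in zy.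
Qed.

Lemma hasse_connect_up (A : {pred T}) :
  (forall u v, u \in A -> u <= v -> v \in A) ->
  forall u v, u \in S -> u \in A -> u <= v -> connect [rel w w' in A | hasse_edge S w w'] u v.
Proof.
move=> A_up u v; elim/gt_ind: u => u IHu uS uA uv.
have [<- //|uNv] := eqVneq u v.
have [|y uy yv] := exists_covers_in uS (b := v); first by rewrite lt_neqAle uNv uv.
have /and4P [_ yS uy' _] := uy.
apply: connect_trans (connect1 _) (IHu y uy' yS (A_up _ _ uA (ltW uy')) yv).
by rewrite /= uA (A_up _ _ uA (ltW uy')) /hasse_edge uy.
Qed.

Lemma unique_covers_upset_chain : unique_upper_covers ->
  forall a b1 b2, a \in S -> a <= b1 -> a <= b2 -> b1 >=< b2.
Proof.
move=> uniq_cov a b1 b2; elim/gt_ind: a => a IHa aS ab1 ab2.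
have [<-|a_b1] := eqVneq a b1; first exact: le_comparable.
have [<-|a_b2] := eqVneq a b2; first exact: ge_comparable.
have [|y1 ay1 y1b1] := exists_covers_in aS (b := b1); first by rewrite lt_neqAle a_b1.
have [|y2 ay2 y2b2] := exists_covers_in aS (b := b2); first by rewrite lt_neqAle a_b2.
rewrite (uniq_cov _ _ _ ay2 ay1) in y2b2.
by case/and4P: ay1 => _ y1S ay1 _; apply: IHa ay1 y1S y1b1 y2b2.
Qed.

Lemma rooted_tree_unique_covers : rooted_tree S -> unique_upper_covers.
Proof.
case=> _ [_ acyclic] [r [[rS _] r_uniq]] x y1 y2 xy1 xy2; apply/eqP/contraT => y12.
have below_r z : z \in S -> z <= r.
  move=> zS; have [m [mS zm m_max]] := exists_maximal (P := [in S]) zS.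
  by rewrite -(r_uniq m).
(* Hasse paths climbing from y1 and y2 to the root avoid x. *)
pose A := [pred z | x < z].
have A_up u v : u \in A -> u <= v -> v \in A by exact: lt_le_trans.
have A_sym : connect_sym [rel u v in A | hasse_edge S u v].
  by apply: sym_connect_sym => u v /=; rewrite hasse_edge_sym (andbC (u \in A)).
have /and4P [xS y1S xy1' _] := xy1; have /and4P [_ y2S xy2' _] := xy2.
have y1r := hasse_connect_up A_up y1S xy1' (below_r _ y1S).
have y2r := hasse_connect_up A_up y2S xy2' (below_r _ y2S).
have y12_conn : connect [rel u v in A | hasse_edge S u v] y1 y2.
  by rewrite (connect_trans y1r) // A_sym.
have xNA : x \notin A by rewrite inE ltxx.
have [||c c3] := ucycle_through hasse_edge_sym xNA _ _ y12 y12_conn.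
- by rewrite /hasse_edge xy1.
- by rewrite /hasse_edge xy2.
by rewrite (negbTE (acyclic c c3)).
Qed.

End Hasse.

Section Forest.
Variables (disp : Order.disp_t) (T : finPOrderType disp).

Lemma comparable_connect_sym : connect_sym (@Order.comparable _ T).
Proof. by apply: sym_connect_sym => x y; rewrite comparable_sym. Qed.

Lemma rooted_forest_upset_chains : rooted_forest T -> upset_chains T.
Proof.
case=> Pi [Pi_part Pi_apart Pi_trees] a b1 b2 ab1 ab2.
have block_of x : exists2 S, S \in Pi & x \in S.
  have : x \in cover Pi by rewrite (cover_partition Pi_part) inE.
  by case/bigcupP=> S; exists S.
have [S SPi aS] := block_of a.
have S_closed : closed (>=<%O) S.
  apply: (intro_closed comparable_connect_sym) => u v uv uS.
  have [S' S'Pi vS'] := block_of v.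
  have [-> //|SS'] := eqVneq S S'.
  by move: (Pi_apart _ _ SPi S'Pi SS' _ _ uS vS'); rewrite uv.
exact: unique_covers_upset_chain S_closed
  (rooted_tree_unique_covers S_closed (Pi_trees S SPi)) _ _ _ aS ab1 ab2.
Qed.

Definition joinable (x y : T) : bool := [exists u, (x <= u) && (y <= u)].

Lemma comparable_joinable x y : x >=< y -> joinable x y.
Proof.
by case/comparable_leP => xy; apply/existsP; [exists y | exists x]; rewrite lexx ?xy ?ltW.
Qed.

Lemma joinable_sym : symmetric joinable.
Proof. by move=> x y; apply/existsP/existsP => -[u /andP [xu yu]]; exists u; rewrite xu yu. Qed.

Hypothesis chainT : upset_chains T.

Lemma joinable_trans : transitive joinable.
Proof.
move=> y x z /existsP [u /andP [xu yu]] /existsP [v /andP [yv zv]]; apply/existsP.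
case/comparable_leP: (chainT yu yv) => uv.
  by exists v; rewrite zv (le_trans xu uv).
by exists u; rewrite xu (le_trans zv (ltW uv)).
Qed.

Lemma joinable_equivalence : equivalence_rel joinable.
Proof.
move=> x y z; split=> [|xy]; first exact: comparable_joinable (comparablexx z).
apply/idP/idP => [xz|]; last exact: joinable_trans.
by apply: joinable_trans xz; rewrite joinable_sym.
Qed.

Section JoinableClass.
Variable x0 : T.
Let S := [set y | joinable x0 y].

Lemma joinable_class_closed : closed (>=<%O) S.
Proof.
apply: (intro_closed comparable_connect_sym) => u v uv.
by rewrite !inE => /joinable_trans; apply; apply: comparable_joinable.
Qed.

Lemma joinable_class_upper_bound y z :
  y \in S -> z \in S -> exists2 u, u \in S & (y <= u) && (z <= u).
Proof.
rewrite !inE => x0y x0z; have /existsP [u /andP [yu zu]] : joinable y z.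
  by apply: joinable_trans x0z; rewrite joinable_sym.
exists u; last by rewrite yu zu.
by rewrite inE (joinable_trans x0y) // comparable_joinable // le_comparable.
Qed.

Lemma joinable_class_rooted_tree : rooted_tree S.
Proof.
have hasse_up y u : y \in S -> y <= u -> connect (hasse_edge S) y u.
  move=> yS yu.
  have := hasse_connect_up (A := predT) joinable_class_closed (fun _ _ _ _ => isT) yS isT yu.
  by apply: connect_sub => v w /andP [_ /connect1].
split; [|split|].
- move=> y z yS zS; have [u uS /andP [yu zu]] := joinable_class_upper_bound yS zS.
  apply: (connect_trans (y := u)); apply: connect1.
  + by rewrite yS uS le_comparable.
  + by rewrite uS zS ge_comparable.
- move=> y z yS zS; have [u uS /andP [yu zu]] := joinable_class_upper_bound yS zS.
  rewrite (connect_trans (hasse_up _ _ yS yu)) //.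
  by rewrite (sym_connect_sym (@hasse_edge_sym _ _ S)) hasse_up.
- exact: unique_covers_hasse_acyclic (upset_chains_unique_covers chainT).
have x0S : x0 \in S by rewrite inE comparable_joinable ?comparablexx.
have [r [rS _ r_max]] := exists_maximal (P := [in S]) x0S.
exists r; split=> // y [yS y_max].
have [u uS /andP [ru yu]] := joinable_class_upper_bound rS yS.
by rewrite -(y_max u uS yu) (r_max u uS ru).
Qed.

End JoinableClass.

Lemma upset_chains_rooted_forest : rooted_forest T.
Proof.
have joinable_equiv : {in [set: T] & &, equivalence_rel joinable}.
  by move=> x y z _ _ _; apply: joinable_equivalence.
exists (equivalence_partition joinable [set: T]); split.
- exact: equivalence_partitionP joinable_equiv.
- move=> _ _ /imsetP [x1 _ ->] /imsetP [x2 _ ->] S12 x y; rewrite !inE /= => x1x x2y.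
  apply: contra S12 => xy; apply/eqP/setP => z; rewrite !inE /=.
  apply: (joinable_equivalence _ _ _).2; apply: joinable_trans x1x _.
  by apply: joinable_trans (comparable_joinable xy) _; rewrite joinable_sym.
move=> _ /imsetP [x0 _ ->].
have -> : [set y in [set: T] | joinable x0 y] = [set y | joinable x0 y].
  by apply/setP => y; rewrite !inE.
exact: joinable_class_rooted_tree.
Qed.

End Forest.

Section Stability.
Variables (disp : Order.disp_t) (T : finPOrderType disp).

Lemma path_le_last (x : T) s : path <=%O x s -> {in x :: s, forall p, p <= last x s}.
Proof.
elim: s x => [|y s IHs] x /=; first by move=> _ p /[!inE] /eqP ->.
case/andP=> xy ys p /[!inE] /predU1P [->|]; last exact: IHs.
exact: le_trans xy (IHs y ys y (mem_head y s)).
Qed.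

Lemma bchain_le b C : bchain b C -> {in C, forall p : T, p <= b}.
Proof.
case: C => // c C /andP [c_path Cb] p pC.
exact: le_trans (path_le_last c_path pC) Cb.
Qed.

Lemma antichain2 (b1 b2 : T) : ~~ (b1 >=< b2) -> antichain [set b1; b2].
Proof.
move=> b12 x y; rewrite !inE => /orP [] /eqP -> /orP [] /eqP -> // => [|].
- by rewrite (negbTE b12).
- by rewrite comparable_sym (negbTE b12).
Qed.

Lemma chain_in_mset_xvar (B : {set T}) n b C : antichain B -> b \in B -> bchain b C ->
  chain_in C (mmul n (mset B)) -> chain_in C (mmul n (xvar b)).
Proof.
move=> B_anti bB bC /forallP C_in; apply/forallP => p; move: (C_in p); rewrite !ffunE.
have [->|pb] := eqVneq p b; first by rewrite bB.
case: (boolP (p \in B)) => //= pB _; rewrite addn0 (count_memPn _) //.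
by apply: contra pb => /(bchain_le bC) /le_comparable /(B_anti _ _ pB bB) ->.
Qed.

Lemma longest_bchain_power (B : {set T}) a b k : antichain B -> b \in B -> a <= b ->
  longest_bchain b (rcons (nseq k a) b) (mmul (seq_mono (nseq k a)) (mset B)).
Proof.
move=> B_anti bB ab.
have sorted_ab : sorted <=%O (rcons (nseq k a) b).
  by case: k => //= k; elim: k => /= [|k ->]; rewrite ?lexx ?ab.
split.
- by rewrite /bchain sorted_ab last_rcons lexx.
- apply/forallP => p; rewrite !ffunE -cats1 count_cat /= addn0 leq_add2l.
  by case: eqP => // <-; rewrite bB.
move=> C bC /(chain_in_mset_xvar B_anti bB bC) /mdvd_mdeg.
by rewrite mdeg_seq_mono mdeg_mmul mdeg_seq_mono mdeg_xvar size_rcons size_nseq addn1.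
Qed.

Lemma goes_through_power (a b : T) k : a <= b -> goes_through a b (rcons (nseq k a) b).
Proof.
by move=> ab; rewrite /goes_through ab all_rcons all_nseq le_comparable // comparablexx orbT.
Qed.

Lemma P_stable_upset_chains e : (2 <= e)%N -> P_stable (maxpow (T := T) e) -> upset_chains T.
Proof.
move=> e2 e_stable a b1 b2 ab1 ab2; apply: contraT => b12.
have b1Nb2 : b1 != b2 by apply: contraNneq b12 => ->; rewrite comparablexx.
have e_k : e = (e - 2).+2 by rewrite -addn2 subnK.
pose n := seq_mono (nseq (e - 2) a).
have /maxpowE : maxpow e (mmul n (xvar a)).
  apply: e_stable (antichain2 b12) _ _.
    apply/maxpowE; rewrite mdeg_mmul mdeg_mset cards2 b1Nb2.
    by rewrite mdeg_seq_mono size_nseq addn2 -e_k.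
  move=> b bB; have ab : a <= b by case/set2P: bB => ->.
  exists (rcons (nseq (e - 2) a) b).
  by split; [apply: longest_bchain_power (antichain2 b12) bB ab | apply: goes_through_power].
by rewrite mdeg_mmul mdeg_xvar mdeg_seq_mono size_nseq addn1 {1}e_k ltnn.
Qed.

Lemma upset_chains_P_stable e : upset_chains T -> P_stable (maxpow (T := T) e).
Proof.
move=> chainT n B a B_anti /maxpowE nB_e B_through; apply/maxpowE.
apply: leq_trans nB_e _; rewrite !mdeg_mmul mdeg_xvar mdeg_mset leq_add2l leqNgt.
apply/card_gt1P => -[x [y [xB yB]]]; apply/negP/negPn/eqP.
have [_ [_ /andP [ax _]]] := B_through x xB; have [_ [_ /andP [ay _]]] := B_through y yB.
exact: B_anti xB yB (chainT _ _ _ ax ay).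
Qed.

End Stability.

Theorem proposition3p16 (disp : Order.disp_t) (T : finPOrderType disp) (e : nat) :
  (2 <= e)%N -> (P_stable (maxpow (T := T) e) <-> rooted_forest T).
Proof.
move=> e2; split=> [/(P_stable_upset_chains e2)|/rooted_forest_upset_chains].
  exact: upset_chains_rooted_forest.
exact: upset_chains_P_stable.
Qed.
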